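(* Let $n\ge3$ and let $f$ be a $\gamma_{tr3}(P_3\square P_n)$-function such that the number of vertices $v$ with $f(v)=\emptyset$ is minimum among all $\gamma_{tr3}(P_3\square P_n)$-functions. If $j\in\{0,1,\dots,n-2\}$ satisfies $|f((1,j))|=2$, then $|f((1,j+1))|=|f((2,j))|=0$.
   Context: $P_m$ denotes the directed path with vertex set $\{0,1,\dots,m-1\}$ and arcs $(i,i+1)$ for $0\le i\le m-2$. The Cartesian product $D_1\square D_2$ has vertex set $V(D_1)\times V(D_2)$, with an arc from $(x_1,y_1)$ to $(x_2,y_2)$ iff either $(x_1,x_2)$ is an arc of $D_1$ and $y_1=y_2$, or $x_1=x_2$ and $(y_1,y_2)$ is an arc of $D_2$. For a digraph $D$ and positive integer $k$, a $k$-rainbow dominating function on $D$ is $f:V(D)\to\mathcal P(\{1,\dots,k\})$ such that every $v$ with $f(v)=\emptyset$ satisfies $\bigcup_{u\in N^-(v)}f(u)=\{1,\dots,k\}$, where $N^-(v)$ is the set of in-neighbors of $v$; its weight is $\sum_v|f(v)|$. It is total if additionally the subdigraph induced by $\{v:f(v)\ne\emptyset\}$ has no isolated vertex (a vertex with neither in- nor out-neighbors in it). $\gamma_{trk}(D)$ is the minimum weight of a total $k$-rainbow dominating function, and a $\gamma_{trk}(D)$-function is one attaining it. *)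

From mathcomp Require Import all_boot.
Set Implicit Arguments. Unset Strict Implicit. Unset Printing Implicit Defensive.

Definition dipath (m : nat) : rel 'I_m := fun i j => (nat_of_ord j == (nat_of_ord i).+1).

Definition cartprod (V1 V2 : finType) (D1 : rel V1) (D2 : rel V2) : rel (V1 * V2) :=
  fun a b => (D1 a.1 b.1 && (a.2 == b.2)) || ((a.1 == b.1) && D2 a.2 b.2).

(* Colours {1,...,k} are represented by 'I_k = {0,...,k-1}. *)
Definition rainbow_dom (V : finType) (k : nat) (D : rel V)
  (f : {ffun V -> {set 'I_k}}) : Prop :=
  forall v, f v = set0 -> \bigcup_(u | D u v) f u = [set: 'I_k].

(* Total: the subdigraph induced by {v | f v <> empty} has no isolated vertex. *)
Definition total_rainbow_dom (V : finType) (k : nat) (D : rel V)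
  (f : {ffun V -> {set 'I_k}}) : Prop :=
  rainbow_dom D f /\
  forall v, f v != set0 -> exists u, (f u != set0) /\ (D u v || D v u).

Definition rweight (V : finType) (k : nat) (f : {ffun V -> {set 'I_k}}) : nat :=
  \sum_(v : V) #|f v|.

Definition gamma_trk_function (V : finType) (k : nat) (D : rel V)
  (f : {ffun V -> {set 'I_k}}) : Prop :=
  total_rainbow_dom D f /\
  forall g : {ffun V -> {set 'I_k}}, total_rainbow_dom D g -> rweight f <= rweight g.

Definition num_empty (V : finType) (k : nat) (f : {ffun V -> {set 'I_k}}) : nat :=
  #|[set v | f v == set0]|.

Definition P3Pn (n : nat) : rel ('I_3 * 'I_n) := @cartprod (ordinal 3) (ordinal n) (@dipath 3) (@dipath n).
Arguments P3Pn n : clear implicits.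

From mathcomp Require Import all_boot zify.
Set Implicit Arguments. Unset Strict Implicit. Unset Printing Implicit Defensive.

(* Let v carry at least two colours under a gamma_trk-function f, and let E be
   the set of empty out-neighbours of v.  Taking one colour a away from v and
   giving {a} to every vertex of E yields again a total rainbow dominating
   function, of weight w(f) - 1 + |E| and with |E| fewer empty vertices.  So
   |E| = 0 contradicts the minimality of the weight, and |E| = 1 the minimality
   of the number of empty vertices: v has at least two empty out-neighbours.
   In P_3 [] P_n the vertex (1, j) has only the out-neighbours (1, j+1) and
   (2, j), so both are empty. *)

Definition empty_out (V : finType) (k : nat) (D : rel V)
    (f : {ffun V -> {set 'I_k}}) (v : V) : {set V} :=
  [set w | D v w & f w == set0].

Section Redistribute.

Variables (V : finType) (k : nat) (D : rel V) (f : {ffun V -> {set 'I_k}}).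
Variables (v0 : V) (a : 'I_k).
Hypotheses (a_in : a \in f v0) (two_colours : 1 < #|f v0|).

Definition redistribute : {ffun V -> {set 'I_k}} :=
  [ffun v => if v == v0 then f v0 :\ a
             else if v \in empty_out D f v0 then [set a] else f v].

Let f_v0_neq0 : f v0 != set0.
Proof. by rewrite -card_gt0 ltnW. Qed.

Let v0_notin_empty_out : v0 \notin empty_out D f v0.
Proof. by rewrite inE (negbTE f_v0_neq0) andbF. Qed.

Lemma redistribute_neq0 v :
  (redistribute v != set0) = (f v != set0) || (v \in empty_out D f v0).
Proof.
rewrite ffunE; have [->|_] := eqVneq v v0.
  rewrite (negbTE v0_notin_empty_out) orbF f_v0_neq0 -card_gt0.
  by move: two_colours; rewrite (cardsD1 a) a_in.
by case: ifP => _; rewrite ?orbT ?orbF // -card_gt0 cards1.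
Qed.

Lemma redistribute_total : total_rainbow_dom D f -> total_rainbow_dom D redistribute.
Proof.
have sub_f v : v != v0 -> f v \subset redistribute v.
  move=> /negbTE vv0; rewrite ffunE vv0; case: ifP => [|_]; last exact: subxx.
  by rewrite inE => /andP[_ /eqP ->]; exact: sub0set.
have out_neq0 w : D v0 w -> redistribute w != set0.
  by move=> Dw; rewrite redistribute_neq0 inE Dw; case: (f w == set0).
move=> [dom tot]; split.
- move=> w gw.
  have [wv0 fw] : w != v0 /\ f w = set0.
    have := redistribute_neq0 w; rewrite gw eqxx => /esym/norP[/negbNE/eqP fw _].
    by split=> //; apply: contra_neq f_v0_neq0 => <-; rewrite fw.
  apply/eqP; rewrite eqEsubset subsetT -(dom w fw); apply/bigcupsP => u Duw.
  have uv0 : u != v0.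
    by apply: contraTneq Duw => ->; apply/negP => /out_neq0; rewrite gw eqxx.
  exact: subset_trans (sub_f u uv0) (bigcup_sup u Duw).
- move=> v; rewrite redistribute_neq0 => /orP[fv|].
  + have [u [fu Duv]] := tot v fv.
    have [uv0|uv0] := eqVneq u v0.
      by exists v0; split; [rewrite redistribute_neq0 f_v0_neq0 | rewrite -uv0].
    by exists u; split=> //; apply: contraNneq fu; rewrite -subset0 => <-; exact: sub_f.
  + rewrite inE => /andP[Dv _]; exists v0; split; last by rewrite Dv.
    by rewrite redistribute_neq0 f_v0_neq0.
Qed.

Lemma rweight_redistribute :
  rweight redistribute + 1 = rweight f + #|empty_out D f v0|.
Proof.
have -> : 1 = \sum_v (v == v0 : nat).
  by rewrite (bigD1 v0) //= eqxx big1 // => v /negbTE ->.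
rewrite /rweight -sum1_card [X in _ = _ + X]big_mkcond -!big_split /=.
apply: eq_bigr => v _.
rewrite ffunE; have [->|_] := eqVneq v v0.
  by rewrite (negbTE v0_notin_empty_out) [#|f v0|](cardsD1 a) a_in addn0 addnC.
case: ifP => [|_]; last by rewrite !addn0.
by rewrite inE => /andP[_ /eqP ->]; rewrite cards1 cards0.
Qed.

Lemma num_empty_redistribute :
  num_empty redistribute + #|empty_out D f v0| = num_empty f.
Proof.
rewrite /num_empty.
have -> : [set v | redistribute v == set0] = [set v | f v == set0] :\: empty_out D f v0.
  apply/setP => v; rewrite in_setD !in_set -[_ == set0]negbK redistribute_neq0.
  by rewrite negb_or negbK inE andbC.
have sub : empty_out D f v0 \subset [set v | f v == set0].
  by apply/subsetP => v; rewrite !inE => /andP[].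
by rewrite cardsDS // subnK // subset_leq_card.
Qed.

End Redistribute.

Lemma gamma_trk_min_empty_two_empty_out (V : finType) (k : nat) (D : rel V)
    (f : {ffun V -> {set 'I_k}}) :
  gamma_trk_function D f ->
  (forall g : {ffun V -> {set 'I_k}},
     gamma_trk_function D g -> num_empty f <= num_empty g) ->
  forall v, 1 < #|f v| -> 1 < #|empty_out D f v|.
Proof.
move=> [tf minw] mine v two.
have [a a_in] : exists a, a \in f v by apply/set0Pn; rewrite -card_gt0 ltnW.
have tg := redistribute_total a_in two tf.
have wg := rweight_redistribute D a_in two.
have eg := num_empty_redistribute D a_in two.
set g := redistribute D f v a in tg wg eg.
have w_le := minw g tg.
rewrite ltnNge; apply/negP => e_le1.
have gg : gamma_trk_function D g.
  by split=> // h /minw; lia.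
have := mine g gg; lia.
Qed.

Lemma P3Pn_out_mid (n : nat) (j : 'I_n) (hj : j.+1 < n) :
  [set w | P3Pn n (inord 1, j) w] = [set (inord 1, Ordinal hj); (inord 2, j)].
Proof.
apply/setP => -[x y]; rewrite !inE /P3Pn /cartprod /dipath /= inordK //.
rewrite !xpair_eqE -!val_eqE /= !inordK //.
by rewrite orbC [1 == _]eq_sym [nat_of_ord j == _]eq_sym.
Qed.

Theorem lemma4p9 (n : nat) (hn : 3 <= n)
  (f : {ffun 'I_3 * 'I_n -> {set 'I_3}})
  (hf : gamma_trk_function (P3Pn n) f)
  (hmin : forall g : {ffun 'I_3 * 'I_n -> {set 'I_3}},
            gamma_trk_function (P3Pn n) g -> num_empty f <= num_empty g)
  (j : 'I_n) (hj : j.+1 < n)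
  (h2 : #|f (inord 1, j)| = 2) :
  #|f (inord 1, Ordinal hj)| = 0 /\ #|f (inord 2, j)| = 0.
Proof.
set E := empty_out (P3Pn n) f (inord 1, j).
have two_empty : 1 < #|E| by apply: gamma_trk_min_empty_two_empty_out; rewrite ?h2.
have E_sub : E \subset [set (inord 1, Ordinal hj); (inord 2, j)].
  by rewrite -P3Pn_out_mid; apply/subsetP => w; rewrite !inE => /andP[].
have E_pair : E = [set (inord 1, Ordinal hj); (inord 2, j)].
  by apply/eqP; rewrite eqEcard E_sub cards2 (leq_trans _ two_empty) // ltnS leq_b1.
have empty w : w \in E -> #|f w| = 0 by rewrite inE => /andP[_ /eqP ->]; rewrite cards0.
by split; apply: empty; rewrite E_pair !inE eqxx ?orbT.
Qed.
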